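(* Let $G$ be a connected graph with $\omega(G)=n(G)-3$. Then $$n(G)-8\le \dim_l(G)\le n(G)-3.$$ Furthermore, both bounds are sharp, i.e., for each bound there exist connected graphs $G$ with $\omega(G)=n(G)-3$ attaining it.
   Context: All graphs are finite and simple. $n(G)$ is the number of vertices and $\omega(G)$ the clique number of $G$. For vertices $x,y$ of a connected graph $G$, $d_G(x,y)$ is the length of a shortest $x,y$-path. A vertex $w$ distinguishes vertices $u,v$ if $d_G(u,w)\neq d_G(v,w)$. A set $W\subseteq V(G)$ is a local resolving set of $G$ if for every pair of adjacent vertices $u,v\in V(G)\setminus W$ some vertex of $W$ distinguishes $u$ and $v$. The local metric dimension $\dim_l(G)$ is the minimum cardinality of a local resolving set of $G$. *)

From mathcomp Require Import all_boot.
Set Implicit Arguments. Unset Strict Implicit. Unset Printing Implicit Defensive.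

Definition simple_graph (T : finType) (e : rel T) : Prop :=
  symmetric e /\ irreflexive e.

Definition connected_graph (T : finType) (e : rel T) : Prop :=
  0 < #|T| /\ forall x y : T, connect e x y.

Fixpoint ball (T : finType) (e : rel T) (k : nat) (x : T) : {set T} :=
  match k with
  | 0 => [set x]
  | k'.+1 => ball e k' x :|: [set y | [exists z in ball e k' x, e z y]]
  end.

(* d_G(x,y): least k such that y is within distance k of x (for a connected
   graph this is < #|T|, hence found in iota 0 #|T|). *)
Definition dist (T : finType) (e : rel T) (x y : T) : nat :=
  find (fun k => y \in ball e k x) (iota 0 #|T|).

Definition clique (T : finType) (e : rel T) (A : {set T}) : bool :=
  [forall x in A, forall y in A, (x != y) ==> e x y].

Definition clique_number (T : finType) (e : rel T) : nat :=
  \max_(A : {set T} | clique e A) #|A|.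

Definition local_resolving (T : finType) (e : rel T) (W : {set T}) : bool :=
  [forall u, forall v, [&& u \notin W, v \notin W & e u v] ==>
     [exists w in W, dist e u w != dist e v w]].

Lemma setT_local_resolving (T : finType) (e : rel T) :
  local_resolving e [set: T].
Proof. by apply/forallP => u; apply/forallP => v; rewrite in_setT. Qed.

Definition local_dim (T : finType) (e : rel T) : nat :=
  #|[arg min_(W < [set: T] | local_resolving e W) #|W|]|.

From mathcomp Require Import all_boot zify.
Set Implicit Arguments. Unset Strict Implicit. Unset Printing Implicit Defensive.

(* Lower bound: the vertices of a maximum clique K lying outside a local
   resolving set W are pairwise adjacent, so W \ K must separate them; a vertex
   separates two adjacent vertices iff their distances to it have different
   parities, hence |K \ W| <= 2 ^ |W \ K| with |W \ K| <= n - omega = 3.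
   Upper bound: if every edge inside a triple S is split by some vertex outside
   S (adjacent to exactly one end), then V \ S is locally resolving.  Were there
   no such triple, any two non-neighbours of a vertex would be adjacent twins;
   as n - omega = 3, no two vertices cover all non-edges, and this together
   with connectivity is contradictory.
   Sharpness: a clique on {0,1}^3 plus three coordinate vertices, and C_5. *)

Section Distance.

Variables (T : finType) (e : rel T).

Lemma ball_sub_adj k x x' : e x' x -> ball e k x \subset ball e k.+1 x'.
Proof.
move=> ex'x; elim: k => [|k IHk].
  by rewrite sub1set !inE; apply/orP; right; apply/existsP; exists x'; rewrite !inE eqxx.
apply/subsetP => y; rewrite [ball e k.+1 x]/= inE => /orP[/(subsetP IHk) yB|].
  by rewrite [ball e k.+2 x']/= inE yB.
rewrite inE => /existsP[z /andP[zB ezy]]; rewrite [ball e k.+2 x']/= !inE.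
by apply/orP; right; apply/existsP; exists z; rewrite (subsetP IHk).
Qed.

Lemma dist_le x y k : k < #|T| -> y \in ball e k x -> dist e x y <= k.
Proof.
move=> ltkT yB; rewrite /dist leqNgt; apply/negP => /(before_find 0).
by rewrite nth_iota // add0n yB.
Qed.

Lemma dist_le_card x y : dist e x y <= #|T|.
Proof. by rewrite /dist -{2}(size_iota 0 #|T|) find_size. Qed.

Lemma mem_ball_dist x y : dist e x y < #|T| -> y \in ball e (dist e x y) x.
Proof.
move=> ltdT; have := ltdT; rewrite {1}/dist -{2}(size_iota 0 #|T|) -has_find.
by move/(nth_find 0); rewrite nth_iota.
Qed.

Lemma dist_eq0 x y : dist e x y = 0 -> y = x.
Proof.
move=> d0; have /mem_ball_dist : dist e x y < #|T| by rewrite d0; apply/card_gt0P; exists x.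
by rewrite d0 inE => /eqP.
Qed.

Lemma mem_ball1 x y : (y \in ball e 1 x) = (y == x) || e x y.
Proof.
rewrite /= !inE; congr (_ || _); apply/existsP/idP => [[z]|exy]; last by exists x; rewrite inE eqxx.
by rewrite inE => /andP[/eqP->].
Qed.

Lemma dist_adj x y : x != y -> e x y -> dist e x y = 1.
Proof.
move=> neq_xy exy; have gt1T : 1 < #|T| by apply/card_gt1P; exists x, y.
have : dist e x y <= 1 by apply: dist_le; rewrite // mem_ball1 exy orbT.
by case: (dist e x y) (@dist_eq0 x y) => [/(_ erefl) yx|[]//]; rewrite yx eqxx in neq_xy.
Qed.

Lemma dist_nonadj x y : x != y -> ~~ e x y -> dist e x y != 1.
Proof.
move=> neq_xy nexy; apply/eqP => d1; have gt1T : 1 < #|T| by apply/card_gt1P; exists x, y.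
have := mem_ball_dist (x := x) (y := y); rewrite d1 mem_ball1 (negbTE nexy) orbF eq_sym.
by move/(_ gt1T); apply/negP.
Qed.

Lemma dist_eq2 u z w : u != w -> ~~ e u w -> e u z -> e z w -> dist e u w = 2.
Proof.
move=> neq_uw neuw euz ezw.
have neq_zu : z != u by apply: contraNneq neuw => zu; rewrite -zu.
have neq_zw : z != w by apply: contraNneq neuw => zw; rewrite -zw.
have gt2T : 2 < #|T|.
  by apply/card_gt2P; exists u, z, w; split => //; split; rewrite // eq_sym.
have : dist e u w <= 2.
  apply: dist_le => //; rewrite [ball e 2 u]/= !inE; apply/orP; right.
  by apply/existsP; exists z; rewrite mem_ball1 euz orbT.
have := dist_nonadj neq_uw neuw; have := @dist_eq0 u w.
by case: (dist e u w) => [/(_ erefl) wu|[|[]]] //; rewrite wu eqxx in neq_uw.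
Qed.

Lemma dist_adj_leS x x' y : e x' x -> dist e x' y <= (dist e x y).+1.
Proof.
move=> ex'x; case: (ltnP (dist e x y) #|T|) => [ltdT|leTd].
  have yB := subsetP (ball_sub_adj (dist e x y) ex'x) _ (mem_ball_dist ltdT).
  case: (ltnP (dist e x y).+1 #|T|) => [|leTdS]; first by move/dist_le; apply.
  exact: leq_trans (dist_le_card _ _) leTdS.
exact: leq_trans (dist_le_card _ _) (leq_trans leTd _).
Qed.

Lemma dist_neq_adj u v w :
  w != u -> w != v -> e u w != e v w -> dist e u w != dist e v w.
Proof.
move=> neq_wu neq_wv; rewrite eq_sym in neq_wu; rewrite eq_sym in neq_wv.
case euw: (e u w); case evw: (e v w) => // _.
  by rewrite (dist_adj neq_wu euw) eq_sym dist_nonadj ?evw.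
by rewrite (dist_adj neq_wv evw) dist_nonadj ?euw.
Qed.

End Distance.

Section LocalDimension.

Variables (T : finType) (e : rel T).

Lemma local_dim_min W : local_resolving e W -> local_dim e <= #|W|.
Proof.
by rewrite /local_dim; case: arg_minnP => [|W0 _]; [apply: setT_local_resolving | apply].
Qed.

Lemma local_dimP : exists2 W, local_resolving e W & local_dim e = #|W|.
Proof.
by rewrite /local_dim; case: arg_minnP => [|W0 resW0 _]; [apply: setT_local_resolving | exists W0].
Qed.

End LocalDimension.

Section Cliques.

Variables (T : finType) (e : rel T).

Lemma clique_adj K x y : clique e K -> x \in K -> y \in K -> x != y -> e x y.
Proof. by move=> /forall_inP/(_ x) cK xK yK; move/forall_inP: (cK xK) => /(_ y yK)/implyP. Qed.

Lemma max_cliqueP : exists2 K, clique e K & #|K| = clique_number e.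
Proof.
have clique0 : clique e set0 by apply/forall_inP => x; rewrite inE.
exists [arg max_(K > set0 | clique e K) #|K|]; first by case: arg_maxnP.
by rewrite /clique_number (bigmax_eq_arg set0).
Qed.

Lemma clique_card_le (A : {set T}) : clique e A -> #|A| <= clique_number e.
Proof. exact: (@leq_bigmax_cond _ (clique e) (fun A => #|A|)). Qed.

Lemma clique_number_indep (I : {set T}) :
  {in I &, forall x y, ~~ e x y} -> clique_number e + #|I| <= #|T| + 1.
Proof.
move=> indepI; have [K cK <-] := max_cliqueP.
have : #|K :&: I| <= 1.
  apply/card_le1_eqP => x y /setIP[xK xI] /setIP[yK yI]; apply/eqP.
  by apply: contraNT (indepI y x yI xI); apply: clique_adj cK yK xK.
by have := cardsUI K I; have := max_card (K :|: I); lia.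
Qed.

End Cliques.

Lemma eq_odd_close a b : a <= b.+1 -> b <= a.+1 -> odd a = odd b -> a = b.
Proof.
move=> le_ab le_ba; case: (ltngtP a b) => // [lt_ab|lt_ba].
  have -> : b = a.+1 by lia.
  by rewrite /=; case: (odd a).
have -> : a = b.+1 by lia.
by rewrite /=; case: (odd b).
Qed.

Lemma leq_expn2_sub j m : j <= m -> 2 ^ j + m <= 2 ^ m + j.
Proof.
move/subnK <-; elim: (m - j) => // k IHk.
have : 0 < 2 ^ (k + j) by rewrite expn_gt0.
by rewrite addSn expnS; lia.
Qed.

Section LowerBound.

Variables (T : finType) (e : rel T).
Hypothesis sym_e : symmetric e.

Lemma card_clique_resolved K W :
  clique e K -> local_resolving e W -> #|K :\: W| <= 2 ^ #|W :\: K|.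
Proof.
move=> cK resW.
pose signature k := [set w in W :\: K | odd (dist e k w)].
suff inj_sig : {in K :\: W &, injective signature}.
  rewrite -(card_in_imset inj_sig) -card_powerset; apply: subset_leq_card.
  apply/subsetP => _ /imsetP[k _ ->]; rewrite powersetE.
  by apply/subsetP => w; rewrite inE => /andP[].
move=> k k' /setDP[kK kW] /setDP[k'K k'W] eq_sig; apply: contraTeq isT => neq_kk'.
have ekk' := clique_adj cK kK k'K neq_kk'.
move/forallP/(_ k)/forallP/(_ k'): resW; rewrite kW k'W ekk' /=.
case/exists_inP => w wW /eqP[].
have neq_wk : w != k by apply: contraNneq kW => <-.
have neq_wk' : w != k' by apply: contraNneq k'W => <-.
have [wK|wNK] := boolP (w \in K).
  have [ekw ek'w] : e k w /\ e k' w by split; apply: (clique_adj cK); rewrite // eq_sym.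
  by rewrite !dist_adj // eq_sym.
apply: eq_odd_close; rewrite ?dist_adj_leS // 1?sym_e //.
by have /setP/(_ w) := eq_sig; rewrite !inE wNK wW.
Qed.

Lemma local_dim_lower : #|T| <= local_dim e + 2 ^ (#|T| - clique_number e).
Proof.
have [K cK <-] := max_cliqueP e; have [W resW ->] := local_dimP e.
have le_WK_cK : #|W :\: K| <= #|T| - #|K|.
  by rewrite -(cardsC K) addKn setDE subset_leq_card ?subsetIr.
have := card_clique_resolved cK resW; have := leq_expn2_sub le_WK_cK.
have := cardsID W K; have := cardsID K W; have := max_card (mem K).
by rewrite setIC; lia.
Qed.

End LowerBound.

Definition splits (T : finType) (e : rel T) (S : {set T}) (u v : T) : bool :=
  [exists w in ~: S, e u w != e v w].

Definition edges_split (T : finType) (e : rel T) (S : {set T}) : bool :=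
  [forall u in S, forall v in S, e u v ==> splits e S u v].

Definition nonadj (T : finType) (e : rel T) (x y : T) : bool := (x != y) && ~~ e x y.

Lemma notin_set2 (T : finType) (x p q : T) :
  (x \notin [set p; q]) = (x != p) && (x != q).
Proof. by rewrite !inE negb_or. Qed.

Lemma notin_set3 (T : finType) (x a b c : T) :
  (x \notin [set a; b; c]) = [&& x != a, x != b & x != c].
Proof. by rewrite !inE !negb_or andbA. Qed.

Lemma cards3 (T : finType) (a b c : T) :
  a != b -> a != c -> b != c -> #|[set a; b; c]| = 3.
Proof.
move=> neq_ab neq_ac neq_bc.
by rewrite setUC cardsU1 cards2 notin_set2 !(eq_sym c) neq_ab neq_ac neq_bc.
Qed.

Section Splitting.

Variables (T : finType) (e : rel T).
Hypotheses (sym_e : symmetric e) (irr_e : irreflexive e).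

Lemma splitsC S u v : splits e S u v = splits e S v u.
Proof. by apply: eq_existsb => w; rewrite eq_sym. Qed.

Lemma local_resolving_setC S : edges_split e S -> local_resolving e (~: S).
Proof.
move=> splitS; apply/forallP => u; apply/forallP => v; apply/implyP.
rewrite !in_setC !negbK => /and3P[uS vS euv].
have /forall_inP/(_ u uS)/forall_inP/(_ v vS)/implyP/(_ euv) := splitS.
case/exists_inP => w wNS neq_uvw; apply/exists_inP; exists w => //.
by apply: dist_neq_adj => //; apply: contraTneq wNS => ->; rewrite in_setC negbK.
Qed.

Lemma local_dim_le_setC S : edges_split e S -> local_dim e <= #|T| - #|S|.
Proof.
by move/local_resolving_setC/local_dim_min; rewrite -(cardsC S) addKn.
Qed.

Lemma edges_split3 a b c :
  (e a b -> splits e [set a; b; c] a b) -> (e a c -> splits e [set a; b; c] a c) ->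
  (e b c -> splits e [set a; b; c] b c) -> edges_split e [set a; b; c].
Proof.
move=> sab sac sbc; apply/forall_inP => u uS; apply/forall_inP => v vS; apply/implyP.
move: uS vS; rewrite !inE => /orP[/orP[]|]/eqP-> /orP[/orP[]|]/eqP->; rewrite ?irr_e //;
  by [apply: sab | apply: sac | apply: sbc | rewrite splitsC sym_e; auto].
Qed.

End Splitting.

Section SplitTriple.

Variables (T : finType) (e : rel T).
Hypotheses (sym_e : symmetric e) (irr_e : irreflexive e).
Hypothesis nonadj_avoiding :
  forall p q, exists c d, [/\ nonadj e c d, c \notin [set p; q] & d \notin [set p; q]].
Hypothesis no_split_triple :
  forall a b c, a != b -> a != c -> b != c -> ~~ edges_split e [set a; b; c].

Lemma nonadjC x y : nonadj e x y = nonadj e y x.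
Proof. by rewrite /nonadj eq_sym sym_e. Qed.

Lemma nonadj_twins a b c w :
  nonadj e b a -> nonadj e b c -> a != c -> w != a -> w != c -> e a w = e c w.
Proof.
move=> /andP[neq_ba nba] /andP[neq_bc nbc] neq_ac neq_wa neq_wc.
have [->|neq_wb] := eqVneq w b; first by rewrite !(sym_e _ b) (negbTE nba) (negbTE nbc).
apply/eqP; move: (no_split_triple (a := a) (b := b) (c := c)).
rewrite eq_sym neq_ba neq_ac neq_bc => /(_ isT isT isT); apply: contraNT => split_w.
apply: (edges_split3 sym_e irr_e) => [eab|_|ebc].
- by rewrite sym_e eab in nba.
- by apply/exists_inP; exists w; rewrite // in_setC notin_set3 neq_wa neq_wb neq_wc.
- by rewrite ebc in nbc.
Qed.

Lemma exists_other_nonadj a b : nonadj e a b -> exists2 b', nonadj e a b' & b' != b.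
Proof.
move=> nab; have [c [d [ncd]]] := nonadj_avoiding a b.
rewrite !notin_set2 => /andP[neq_ca neq_cb] /andP[neq_da neq_db].
have [nac|] := boolP (nonadj e a c); first by exists c.
rewrite /nonadj eq_sym neq_ca /= => /negbNE eac.
have [nad|] := boolP (nonadj e a d); first by exists d.
rewrite /nonadj eq_sym neq_da /= => /negbNE ead.
have split_by_b x y :
    nonadj e x y -> e a x -> e a y -> x != b -> splits e [set a; c; d] a x.
  move=> /andP[neq_xy nexy] eax eay neq_xb; apply/exists_inP; exists b.
    by rewrite in_setC notin_set3 !(eq_sym b) (andP nab).1 neq_cb neq_db.
  rewrite (negbTE (andP nab).2); have [//|nxb] := boolP (e x b).
  have nba : nonadj e b a by rewrite nonadjC.
  have nbx : nonadj e b x by rewrite /nonadj eq_sym neq_xb sym_e.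
  have neq_ax : a != x by apply: contraTneq eax => <-; rewrite irr_e.
  have neq_ya : y != a by apply: contraTneq eay => ->; rewrite irr_e.
  have := nonadj_twins nba nbx neq_ax neq_ya; rewrite eq_sym neq_xy eay (negbTE nexy).
  by move/(_ isT).
have neq_cd : c != d by case/andP: ncd.
have neq_ac : a != c by rewrite eq_sym.
have neq_ad : a != d by rewrite eq_sym.
case/negP: (no_split_triple neq_ac neq_ad neq_cd).
apply: (edges_split3 sym_e irr_e) => [_|_|ecd].
- exact: split_by_b ncd eac ead neq_cb.
- by apply: split_by_b ead eac neq_db; rewrite nonadjC.
- by case/andP: ncd => _; rewrite ecd.
Qed.

Lemma common_neighbour_splits a b u :
  nonadj e a b -> e a u -> e b u -> splits e [set a; b; u] a u.
Proof.
move=> nab eau ebu; have [b' nab' neq_b'b] := exists_other_nonadj nab.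
have [neq_ab' neab'] := andP nab'.
have neq_ub' : u != b' by apply: contraNneq neab' => <-.
apply/exists_inP; exists b'.
  by rewrite in_setC notin_set3 eq_sym neq_ab' neq_b'b eq_sym neq_ub'.
rewrite (negbTE neab'); have [//|nub'] := boolP (e u b').
have neq_ub : u != b by apply: contraTneq ebu => ->; rewrite irr_e.
have neq_bb' : b != b' by rewrite eq_sym.
have := nonadj_twins nab nab' neq_bb' neq_ub neq_ub'.
by rewrite ebu sym_e (negbTE nub').
Qed.

Lemma nonadj_closed a b :
  nonadj e a b -> (forall u, ~~ (e a u && e b u)) -> closed e (nonadj e b).
Proof.
move=> nab no_common.
suff nonadj_step x y : e x y -> nonadj e b x -> nonadj e b y.
  by move=> x y exy; apply/idP/idP; apply: nonadj_step; rewrite // sym_e.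
move=> exy nbx; have [neq_bx nebx] := andP nbx; apply/andP; split.
  by apply: contraNneq nebx => ->; rewrite sym_e.
apply/negP => eby.
have neay : ~~ e a y by move: (no_common y); rewrite eby andbT.
have neq_ax : a != x by apply: contraNneq neay => ->.
have neq_ya : y != a by apply: contraTneq eby => ->; rewrite sym_e (negbTE (andP nab).2).
have neq_yx : y != x by apply: contraTneq exy => ->; rewrite irr_e.
have nba : nonadj e b a by rewrite nonadjC.
by have := nonadj_twins nba nbx neq_ax neq_ya neq_yx; rewrite exy (negbTE neay).
Qed.

Hypothesis conn_e : connected_graph e.

Lemma no_split_triple_absurd : False.
Proof.
case/card_gt0P: (proj1 conn_e) => x0 _; have [a [b [nab _ _]]] := nonadj_avoiding x0 x0.
have [neq_ab neab] := andP nab.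
have [/existsP[u /andP[eau ebu]]|/existsPn no_common] := boolP [exists u, e a u && e b u].
  have neq_au : a != u by apply: contraTneq ebu => <-; rewrite sym_e.
  have neq_bu : b != u by apply: contraTneq eau => <-.
  case/negP: (no_split_triple neq_ab neq_au neq_bu).
  apply: (edges_split3 sym_e irr_e) => [eab|_|_]; first by rewrite eab in neab.
    exact: common_neighbour_splits.
  by rewrite (setUC [set a]); apply: common_neighbour_splits; rewrite // nonadjC.
(* a is a non-neighbour of b, and connectivity would carry this over to b. *)
have := closed_connect (nonadj_closed nab no_common) (proj2 conn_e a b).
by rewrite !unfold_in /= eqxx eq_sym neq_ab sym_e neab.
Qed.

End SplitTriple.

Lemma exists_split_triple (T : finType) (e : rel T) :
  simple_graph e -> connected_graph e ->
  (forall p q, exists c d, [/\ nonadj e c d, c \notin [set p; q] & d \notin [set p; q]]) ->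
  exists2 S : {set T}, #|S| = 3 & edges_split e S.
Proof.
move=> [sym_e irr_e] conn_e avoid.
have : [exists S : {set T}, (#|S| == 3) && edges_split e S].
  apply: contraT => /existsPn noS.
  have [] := no_split_triple_absurd sym_e irr_e avoid _ conn_e => a b c neq_ab neq_ac neq_bc.
  by have := noS [set a; b; c]; rewrite cards3.
by case/existsP => S /andP[/eqP cardS splitS]; exists S.
Qed.

Lemma nonadj_avoiding_pair (T : finType) (e : rel T) p q :
  clique_number e + 3 <= #|T| ->
  exists c d, [/\ nonadj e c d, c \notin [set p; q] & d \notin [set p; q]].
Proof.
move=> le_omega_T.
have : ~~ clique e (~: [set p; q]).
  apply/negP => /clique_card_le.
  have : #|[set p; q]| <= 2 by rewrite cards2; case: (p != q).
  by have := cardsC [set p; q]; lia.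
case/forall_inPn => c; rewrite in_setC => cNpq /forall_inPn[d]; rewrite in_setC => dNpq.
by rewrite negb_imply => ncd; exists c, d.
Qed.

Lemma local_dim_upper (T : finType) (e : rel T) :
  simple_graph e -> connected_graph e -> clique_number e + 3 <= #|T| ->
  local_dim e <= #|T| - 3.
Proof.
move=> simple_e conn_e le_omega_T.
have avoid p q := nonadj_avoiding_pair p q le_omega_T.
have [S cardS splitS] := exists_split_triple simple_e conn_e avoid.
by rewrite -cardS; apply: local_dim_le_setC.
Qed.

Lemma connected_from (T : finType) (e : rel T) (x0 : T) :
  symmetric e -> (forall x, connect e x0 x) -> connected_graph e.
Proof.
move=> sym_e reach; split; first by apply/card_gt0P; exists x0.
by move=> x y; apply: connect_trans (reach y); rewrite (sym_connect_sym sym_e).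
Qed.

Section BitGraph.

Variable k : nat.

Definition bit_graph : rel ({ffun 'I_k -> bool} + 'I_k)%type :=
  fun x y => match x, y with
  | inl f, inl g => f != g
  | inl f, inr i | inr i, inl f => f i
  | inr _, inr _ => false
  end.

Lemma card_bit_graph : #|{: {ffun 'I_k -> bool} + 'I_k}| = 2 ^ k + k.
Proof. by rewrite card_sum card_ffun card_bool card_ord. Qed.

Lemma bit_graph_simple : simple_graph bit_graph.
Proof. by split=> [[f|i] [g|j]|[f|i]] //=; rewrite ?eqxx // eq_sym. Qed.

Lemma bit_graph_connected : connected_graph bit_graph.
Proof.
pose hub := @inl _ 'I_k [ffun _ : 'I_k => true].
apply: (@connected_from _ bit_graph hub) => [|x]; first exact: (proj1 bit_graph_simple).
have [->|neq_x] := eqVneq hub x; first exact: connect0.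
by apply: connect1; case: x neq_x => [f|i] //=; rewrite ffunE.
Qed.

Lemma bit_graph_clique_number : clique_number bit_graph = 2 ^ k.
Proof.
apply/eqP; rewrite eqn_leq; apply/andP; split.
  pose I := inl [ffun _ : 'I_k => false] |: [set inr i | i : 'I_k].
  have indepI : {in I &, forall x y, ~~ bit_graph x y}.
    move=> x y; rewrite !inE => /orP[/eqP->|/imsetP[i _ ->]] /orP[/eqP->|/imsetP[j _ ->]];
    by rewrite //= ?ffunE ?eqxx.
  have inlNinr : inl [ffun _ : 'I_k => false] \notin [set inr i | i : 'I_k].
    by apply/imsetP => -[].
  have := clique_number_indep indepI.
  by rewrite card_bit_graph cardsU1 inlNinr card_imset ?card_ord; [lia | move=> i j []].
have inl_inj : injective (@inl {ffun 'I_k -> bool} 'I_k) by move=> f g [].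
have <- : #|[set @inl _ 'I_k f | f : {ffun 'I_k -> bool}]| = 2 ^ k.
  by rewrite card_imset // card_ffun card_bool card_ord.
apply: clique_card_le.
apply/forall_inP => _ /imsetP[f _ ->]; apply/forall_inP => _ /imsetP[g _ ->].
by rewrite /= (inj_eq inl_inj) implybb.
Qed.

Lemma bit_graph_local_dim : local_dim bit_graph = k.
Proof.
apply/eqP; rewrite eqn_leq; apply/andP; split; last first.
  have := local_dim_lower (proj1 bit_graph_simple).
  by rewrite card_bit_graph bit_graph_clique_number addKn; lia.
have inr_inj : injective (@inr {ffun 'I_k -> bool} 'I_k) by move=> i j [].
pose W := [set @inr {ffun 'I_k -> bool} _ i | i : 'I_k].
suff resW : local_resolving bit_graph W.
  by apply: leq_trans (local_dim_min resW) _; rewrite card_imset ?card_ord.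
apply/forallP => -[f|i]; last by apply/forallP => v; rewrite imset_f.
apply/forallP => -[g|j]; last by rewrite imset_f ?andbF.
apply/implyP => /and3P[_ _ neq_fg].
have [i neq_fgi] : exists i, f i != g i.
  apply/existsP; apply: contraNT neq_fg => /existsPn eq_fg.
  by apply/eqP/ffunP => i; apply/eqP/negbNE.
by apply/exists_inP; exists (inr i); rewrite ?imset_f //; apply: dist_neq_adj.
Qed.

End BitGraph.

Definition cycle5 : rel 'I_5 := fun i j => (i.+1 %% 5 == j) || (j.+1 %% 5 == i).

Lemma cycle5_simple : simple_graph cycle5.
Proof.
split=> [i j|i]; first by rewrite /cycle5 orbC.
by apply/negbTE; rewrite /cycle5 orbb; have := ltn_ord i; lia.
Qed.

Lemma cycle5_connected : connected_graph cycle5.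
Proof.
apply: (@connected_from _ cycle5 ord0) => [|x]; first exact: (proj1 cycle5_simple).
rewrite -(inord_val x); elim: (val x) (ltn_ord x) => [_|n IHn lt_n5].
  by rewrite (_ : inord 0 = ord0) //; apply: val_inj; rewrite /= inordK.
apply: connect_trans (IHn (ltnW lt_n5)) (connect1 _).
by rewrite /cycle5 !inordK ?(ltnW lt_n5) // modn_small // eqxx.
Qed.

Lemma cycle5_clique_number : clique_number cycle5 = 2.
Proof.
apply/eqP; rewrite eqn_leq; apply/andP; split.
  apply/bigmax_leqP => A cA; rewrite leqNgt; apply/card_gt2P.
  move=> [x [y [z [[xA yA zA] [neq_xy neq_yz neq_zx]]]]].
  have := clique_adj cA xA yA neq_xy; have := clique_adj cA yA zA neq_yz.
  have := clique_adj cA zA xA neq_zx; have := ltn_ord x; have := ltn_ord y; have := ltn_ord z.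
  by rewrite /cycle5; lia.
have c01 : clique cycle5 [set ord0; Ordinal (isT : 1 < 5)].
  apply/forall_inP => x; rewrite !inE => /orP[]/eqP->;
  by apply/forall_inP => y; rewrite !inE => /orP[]/eqP->.
by have := clique_card_le c01; rewrite cards2.
Qed.

Lemma cycle5_local_dim : local_dim cycle5 = 2.
Proof.
apply/eqP; rewrite eqn_leq; apply/andP; split.
  have := local_dim_upper cycle5_simple cycle5_connected.
  by rewrite cycle5_clique_number card_ord; apply.
have [W resW ->] := local_dimP cycle5; rewrite ltnNge; apply/negP => le_W1.
have [w sub_Ww] : exists w, W \subset [set w].
  have [->|[w wW]] := set_0Vmem W; first by exists ord0; rewrite sub0set.
  exists w; apply/subsetP => x xW; rewrite inE; apply/eqP.
  by move/card_le1_eqP: le_W1; apply.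
(* Both ends of the edge {w + 2, w + 3} are at distance 2 from w. *)
pose rot n : 'I_5 := inord ((w + n) %% 5); have lt_w5 := ltn_ord w.
have [neq_uw neq_vw euv] : [/\ rot 2 != w, rot 3 != w & cycle5 (rot 2) (rot 3)].
  by rewrite /cycle5 -!(inj_eq val_inj) /= !inordK ?ltn_pmod //; split; lia.
have [nuw nvw] : ~~ cycle5 (rot 2) w /\ ~~ cycle5 (rot 3) w.
  by rewrite /cycle5 /= !inordK ?ltn_pmod //; split; lia.
have [euz ezw evz' ez'w] :
    [/\ cycle5 (rot 2) (rot 1), cycle5 (rot 1) w, cycle5 (rot 3) (rot 4) & cycle5 (rot 4) w].
  by rewrite /cycle5 /= !inordK ?ltn_pmod //; split; lia.
have notin_W x : x != w -> x \notin W by apply: contraNN => /(subsetP sub_Ww); rewrite inE.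
move/forallP: resW => /(_ (rot 2)) /forallP /(_ (rot 3)).
rewrite !notin_W // euv => /exists_inP[w0 /(subsetP sub_Ww)]; rewrite inE => /eqP->.
by rewrite (dist_eq2 neq_uw nuw euz ezw) (dist_eq2 neq_vw nvw evz' ez'w).
Qed.

Theorem corollary2p3 :
  (forall (T : finType) (e : rel T),
     simple_graph e -> connected_graph e ->
     clique_number e + 3 = #|T| ->
     #|T| - 8 <= local_dim e <= #|T| - 3)
  /\ (exists (T : finType) (e : rel T),
        [/\ simple_graph e, connected_graph e,
            clique_number e + 3 = #|T| & local_dim e + 8 = #|T|])
  /\ (exists (T : finType) (e : rel T),
        [/\ simple_graph e, connected_graph e,
            clique_number e + 3 = #|T| & local_dim e + 3 = #|T|]).
Proof.
split; [|split].
- move=> T e simple_e conn_e omega_T; apply/andP; split.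
    have := local_dim_lower (proj1 simple_e).
    by rewrite (_ : #|T| - clique_number e = 3); lia.
  by apply: local_dim_upper; rewrite ?omega_T.
- exists _, (@bit_graph 3); split; [exact: bit_graph_simple | exact: bit_graph_connected | |];
  by rewrite card_bit_graph ?bit_graph_clique_number ?bit_graph_local_dim.
- exists _, cycle5; split; [exact: cycle5_simple | exact: cycle5_connected | |];
  by rewrite card_ord ?cycle5_clique_number ?cycle5_local_dim.
Qed.
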